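(* Let $p\ne q$ be primes and $G=\mathbb{Z}_p^2\times\mathbb{Z}_q^2$. If $S\subseteq G$ is spectral and $|S|=pq$, then $S$ is a tile of $G$.
   Context: For $w=(u,v)\in G$ ($u\in\mathbb{Z}_p^2$, $v\in\mathbb{Z}_q^2$) define the character $\chi_w(a,b)=\exp\big(2\pi i(\tfrac{u\cdot a}{p}+\tfrac{v\cdot b}{q})\big)$, and $\chi(S)=\sum_{s\in S}\chi(s)$. $S$ is spectral if there is $\Lambda\subseteq G$ with $|\Lambda|=|S|$ and $\chi_{\lambda-\lambda'}(S)=0$ for all distinct $\lambda,\lambda'\in\Lambda$. $S$ is a tile if there is $T\subseteq G$ with $S+T=G$ and $|S||T|=|G|$. *)

From HB Require Import structures.
From mathcomp Require Import all_boot all_order all_algebra.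
From mathcomp Require Import reals trigo.
From mathcomp Require Import complex.
Set Implicit Arguments. Unset Strict Implicit. Unset Printing Implicit Defensive.
Import Order.TTheory GRing.Theory Num.Theory.
Local Open Scope ring_scope.

Definition Gty (p q : nat) : finType := (('Z_p * 'Z_p) * ('Z_q * 'Z_q))%type.

Definition Gadd (p q : nat) (x y : Gty p q) : Gty p q :=
  ((x.1.1 + y.1.1, x.1.2 + y.1.2), (x.2.1 + y.2.1, x.2.2 + y.2.2)).
Definition Gsub (p q : nat) (x y : Gty p q) : Gty p q :=
  ((x.1.1 - y.1.1, x.1.2 - y.1.2), (x.2.1 - y.2.1, x.2.2 - y.2.2)).

Definition expi (R : realType) (t : R) : R[i] :=
  (cos (2 * pi * t) +i* sin (2 * pi * t))%C.

(* chi_w(a,b) = exp(2 pi i (u.a/p + v.b/q)), w = (u,v), s = (a,b);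
   dot products computed as natural numbers from representatives in [0,p). *)
Definition chi (R : realType) (p q : nat) (w s : Gty p q) : R[i] :=
  expi (((w.1.1 : nat) * (s.1.1 : nat) + (w.1.2 : nat) * (s.1.2 : nat))%:R / p%:R
        + ((w.2.1 : nat) * (s.2.1 : nat) + (w.2.2 : nat) * (s.2.2 : nat))%:R / q%:R).

Definition chiS (R : realType) (p q : nat) (w : Gty p q) (S : {set Gty p q}) : R[i] :=
  \sum_(s in S) chi R w s.

Definition spectral (R : realType) (p q : nat) (S : {set Gty p q}) : Prop :=
  exists Lambda : {set Gty p q}, #|Lambda| = #|S| /\
    forall l l', l \in Lambda -> l' \in Lambda -> l != l' ->
      chiS R (Gsub l l') S = 0.

Definition tile (p q : nat) (S : {set Gty p q}) : Prop :=
  exists T : {set Gty p q},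
    [set Gadd s t | s in S, t in T] = [set: Gty p q] /\
    (#|S| * #|T| = #|Gty p q|)%N.

(* Let [L] be a spectrum of [S]. As [#|L| = #|S|], the character matrix
   [(chi l s)] is invertible, so [S] is in turn a spectrum of [L]: for distinct
   [s, s'] in [S], the character of [d = s - s'] sums to zero over [L]. This
   is a vanishing sum of [pq] roots of unity of order [pq]; Galois conjugation
   and Fourier inversion on [Z_p x Z_q] show that its joint value distribution
   is additive, and as [#|L| = pq] either [d.1 . l.1] is equidistributed mod
   [p] or [d.2 . l.2] is equidistributed mod [q] over [l] in [L].
   On the other hand, since [p ^ 2] does not divide [#|L|], some direction [e]
   of [Z_p ^ 2] is not equidistributed on [L], and likewise some [e'] of
   [Z_q ^ 2]. Hence no difference of [S] lies in [T = <e> x <e'>], a subgroup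
   of order [pq], so [S] is a transversal of [T] and [S + T = G]. *)

From HB Require Import structures.
From mathcomp Require Import all_boot all_order all_algebra all_field.
From mathcomp Require Import reals trigo complex.
From mathcomp Require Import ring lra zify.
Set Implicit Arguments. Unset Strict Implicit. Unset Printing Implicit Defensive.
Import Order.TTheory GRing.Theory Num.Theory.
Local Open Scope ring_scope.

Lemma prim_root_Cyclotomic (F : fieldType) n (z : F) :
  n.-primitive_root z -> root (map_poly intr 'Phi_n) z.
Proof.
move=> prim_z; have n_gt0 := prim_order_gt0 prim_z.
pose Phi d : {poly F} := map_poly intr 'Phi_d.
have prod_Phi d : (0 < d)%N -> \prod_(c <- divisors d) Phi c = 'X^d - 1.
  move=> d_gt0; have /(congr1 (map_poly (intr : int -> F))) := prod_Cyclotomic d_gt0.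
  by rewrite rmorph_prod rmorphB rmorph1 /= map_polyXn.
have : root (\prod_(d <- divisors n) Phi d) z.
  by rewrite prod_Phi // /root !hornerE (prim_expr_order prim_z) subrr.
rewrite /root horner_prod prodf_seq_eq0 => /hasP [d d_n /= Phi_d_z].
have d_dvd_n : (d %| n)%N by rewrite dvdn_divisors.
have d_gt0 : (0 < d)%N := dvdn_gt0 n_gt0 d_dvd_n.
have z_d : z ^+ d = 1.
  have /(congr1 (horner^~ z)) := prod_Phi d d_gt0.
  rewrite (big_rem d) -?dvdn_divisors //= hornerM (eqP Phi_d_z) mul0r !hornerE.
  by move/esym/eqP; rewrite subr_eq0 => /eqP.
have n_dvd_d : (n %| d)%N by rewrite (prim_order_dvd prim_z) z_d.
suff -> : n = d by [].
by apply/eqP; rewrite eqn_dvd n_dvd_d d_dvd_n.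
Qed.

Lemma ratr_Cyclotomic (F : numFieldType) n :
  map_poly (ratr : rat -> F) (map_poly intr 'Phi_n) = map_poly intr 'Phi_n.
Proof. by rewrite -map_poly_comp; apply: eq_map_poly => a /=; rewrite rmorph_int. Qed.

(* Irreducibility of [Phi_n] over [Q]: a complex root of [gcdp Phi_n Q] is a
   primitive [n]-th root of unity, whose minimal polynomial is [Phi_n]. *)
Lemma root_ratr_Cyclotomic_dvdp (F : numFieldType) n (z : F) (Q : {poly rat}) :
  n.-primitive_root z -> root (map_poly ratr Q) z ->
  (map_poly intr 'Phi_n %| Q)%R.
Proof.
move=> prim_z Qz; set Phi : {poly rat} := map_poly intr 'Phi_n; change (Phi %| Q)%R.
have ratr_Phi (K : numFieldType) : map_poly (ratr : rat -> K) Phi = _ :=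
  ratr_Cyclotomic K n.
have [[u v] /= Bezout] := Bezoutp Phi Q; set g := gcdp Phi Q in Bezout.
have Phi_neq0 : Phi != 0 by rewrite monic_neq0 // monic_map // Cyclotomic_monic.
have g_neq0 : g != 0 by rewrite gcdp_eq0 negb_and Phi_neq0.
have gz : root (map_poly (ratr : rat -> F) g) z.
  move: Bezout; rewrite -(eqp_map (ratr : {rmorphism rat -> F})) => /eqp_root <-.
  rewrite rmorphD !rmorphM /= /root hornerD !hornerM ratr_Phi.
  by rewrite (eqP (prim_root_Cyclotomic prim_z)) (eqP Qz) !mulr0 addr0.
have size_g : size g != 1%N.
  have := root_size_gt1 _ gz.
  rewrite map_poly_eq0 g_neq0 size_map_poly => /(_ isT).
  by case: (size g) => [|[|]].
have [w gw] : exists w : algC, root (map_poly ratr g) w.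
  by apply/closed_rootP; rewrite size_map_poly.
have [z0 prim_z0] := C_prim_root_exists (prim_order_gt0 prim_z).
have prim_w : n.-primitive_root w.
  rewrite -(root_cyclotomic prim_z0) -(Cintr_Cyclotomic prim_z0) -ratr_Phi.
  have /dvdpP [r ->] : (g %| Phi)%R by rewrite dvdp_gcdl.
  by rewrite rmorphM /= /root hornerM (eqP gw) mulr0.
have [pw [ratr_pw _] pw_dvd] := minCpolyP w.
have pw_Phi : pw = Phi.
  apply: (map_inj_poly (fmorph_inj (ratr : {rmorphism rat -> algC}))).
    exact: rmorph0.
  by rewrite -ratr_pw ratr_Phi (minCpoly_cyclotomic prim_w) (Cintr_Cyclotomic prim_w).
by rewrite -pw_Phi; apply: (@dvdp_trans _ g); rewrite ?dvdp_gcdr // -pw_dvd.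
Qed.

Lemma root_ratr_prim_root_exp_coprime (F : numFieldType) n (z : F)
    (Q : {poly rat}) k :
  n.-primitive_root z -> root (map_poly ratr Q) z -> coprime k n ->
  root (map_poly ratr Q) (z ^+ k).
Proof.
move=> prim_z Qz coprime_k.
have /dvdpP [r ->] := root_ratr_Cyclotomic_dvdp prim_z Qz.
have prim_zk : n.-primitive_root (z ^+ k) by rewrite prim_root_exp_coprime.
rewrite rmorphM /= /root hornerM ratr_Cyclotomic.
by rewrite (eqP (prim_root_Cyclotomic prim_zk)) mulr0.
Qed.

Section Expi.
Variable R : realType.

Lemma expi0 : expi (0 : R) = 1.
Proof. by rewrite /expi mulr0 cos0 sin0. Qed.

Lemma expi1 : expi (1 : R) = 1.
Proof. by rewrite /expi mulr1 mulr_natl cos2pi sin2pi. Qed.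

Lemma expiD (x y : R) : expi (x + y) = expi x * expi y.
Proof.
rewrite /expi mulrDr cosD sinD; apply/eqP.
by rewrite eq_complex /= eqxx addrC eqxx.
Qed.

Lemma expi_natrM (k : nat) (x : R) : expi (k%:R * x) = expi x ^+ k.
Proof.
elim: k => [|k IHk]; first by rewrite mul0r expi0.
by rewrite -addn1 natrD mulrDl mul1r expiD IHk exprD.
Qed.

(* [Re (expi t) = cos (2 pi t) = 1] forces [sin (pi t) = 0]. *)
Lemma expi_neq1 (t : R) : 0 < t < 1 -> expi t != 1.
Proof.
case/andP=> t_gt0 t_lt1; apply/negP => /eqP/(congr1 (@complex.Re R)) /=.
have -> : 2 * pi * t = (pi * t) *+ 2 by rewrite -mulrA mulr_natl.
rewrite cos_mulr2n => cos_2pit.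
have : sin (pi * t) ^+ 2 = 0 by rewrite sin2cos2; lra.
have : 0 < sin (pi * t).
  apply: sin_gt0_pi; rewrite mulr_gt0 ?pi_gt0 //=.
  by rewrite -{2}(mulr1 pi) ltr_pM2l ?pi_gt0.
by move=> /gt_eqF sin_neq0 /eqP; rewrite sqrf_eq0 sin_neq0.
Qed.

Lemma expi_prim_root n : (0 < n)%N -> n.-primitive_root (expi (n%:R^-1 : R)).
Proof.
move=> n_gt0; apply/andP; split=> //; apply/forallP => i; apply/eqP.
rewrite unity_rootE -expi_natrM.
have nR_neq0 : n%:R != 0 :> R by rewrite pnatr_eq0 -lt0n.
have [->|i_neq] := eqVneq i.+1 n; first by rewrite mulfV // expi1 eqxx.
apply/negbTE/expi_neq1; rewrite mulr_gt0 ?invr_gt0 ?ltr0n //=.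
rewrite ltr_pdivrMr ?ltr0n // mul1r ltr_nat ltn_neqAle i_neq /=.
exact: ltn_ord.
Qed.

End Expi.

Definition equidistributed (T U : finType) (X : {set T}) (f : T -> U) : bool :=
  [forall x, forall y, \sum_(s in X) (f s == x) == \sum_(s in X) (f s == y)]%N.

Section Equidistributed.
Variables (T : finType) (X : {set T}).

Lemma equidistributedP (U : finType) (f : T -> U) :
  reflect (forall x y, \sum_(s in X) (f s == x) = \sum_(s in X) (f s == y))%N
          (equidistributed X f).
Proof.
apply: (iffP forallP) => [f_eq x y|f_eq x]; first by have /forallP/(_ y)/eqP := f_eq x.
by apply/forallP => y; rewrite (f_eq x y).
Qed.

Lemma eq_equidistributed (U : finType) (f g : T -> U) :
  f =1 g -> equidistributed X f = equidistributed X g.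
Proof.
move=> fg; have fiber x : (\sum_(s in X) (f s == x) = \sum_(s in X) (g s == x))%N.
  by apply: eq_bigr => s _; rewrite fg.
by apply/equidistributedP/equidistributedP => fib_eq x y; rewrite ?fiber // -!fiber.
Qed.

Lemma equidistributed_inj (U V : finType) (h : U -> V) (f : T -> U) :
  injective h -> equidistributed X (h \o f) -> equidistributed X f.
Proof.
move=> h_inj /equidistributedP hf_eq; apply/equidistributedP => x y.
have fiber z : (\sum_(s in X) (h (f s) == h z) = \sum_(s in X) (f s == z))%N.
  by apply: eq_bigr => s _; rewrite (inj_eq h_inj).
by rewrite -!fiber; apply: hf_eq.
Qed.

Lemma const_not_equidistributed (U : finType) (u v : U) :
  (0 < #|X|)%N -> u != v -> ~~ equidistributed X (fun _ => u).
Proof.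
move=> X_gt0 u_neq_v; apply/negP => /equidistributedP /(_ u v).
rewrite eqxx sum1_card (negPf u_neq_v) big1 // => X_eq0.
by rewrite X_eq0 in X_gt0.
Qed.

End Equidistributed.

Definition dotp (n : nat) (u v : 'Z_n * 'Z_n) : 'Z_n := u.1 * v.1 + u.2 * v.2.
Definition perpv (n : nat) (e : 'Z_n * 'Z_n) : 'Z_n * 'Z_n := (e.2, - e.1).
Definition scalev (n : nat) (k : 'Z_n) (e : 'Z_n * 'Z_n) : 'Z_n * 'Z_n :=
  (k * e.1, k * e.2).

Lemma dotpC n (u v : 'Z_n * 'Z_n) : dotp u v = dotp v u.
Proof. by rewrite /dotp mulrC [u.2 * _]mulrC. Qed.

Lemma dotpBr n (u v w : 'Z_n * 'Z_n) :
  dotp u (v.1 - w.1, v.2 - w.2) = dotp u v - dotp u w.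
Proof. by rewrite /dotp /=; ring. Qed.

Lemma dotp_scalevl n k (e v : 'Z_n * 'Z_n) : dotp (scalev k e) v = k * dotp e v.
Proof. by rewrite /dotp /=; ring. Qed.

Lemma dotp_perpv_scalev n k (e : 'Z_n * 'Z_n) : dotp (perpv e) (scalev k e) = 0.
Proof. by rewrite /dotp /=; ring. Qed.

Section PrimeModulus.
Variable p : nat.
Hypothesis p_prime : prime p.
Let p_gt1 : (1 < p)%N := prime_gt1 p_prime.

Lemma card_Zp_prime : #|'Z_p| = p.
Proof. by rewrite card_ord Zp_cast. Qed.

Lemma val_ZpD (x y : 'Z_p) : val (x + y) = ((val x + val y) %% p)%N.
Proof. by congr (_ %% _)%N; apply: Zp_cast. Qed.

Lemma val_ZpM (x y : 'Z_p) : val (x * y) = ((val x * val y) %% p)%N.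
Proof. by congr (_ %% _)%N; apply: Zp_cast. Qed.

Lemma val_Zp_lt (x : 'Z_p) : (val x < p)%N.
Proof. by have := ltn_ord x; rewrite [X in (_ < X)%N -> _]Zp_cast. Qed.

Lemma sum_Zp_val (V : nmodType) (f : nat -> V) :
  \sum_(x : 'Z_p) f x = \sum_(i < p) f i.
Proof.
rewrite -[RHS](big_mkord xpredT) -[X in \sum_(0 <= i < X) _]Zp_cast //.
by rewrite big_mkord.
Qed.

Lemma val_dotp (u v : 'Z_p * 'Z_p) :
  val (dotp u v) = (((u.1 : nat) * v.1 + (u.2 : nat) * v.2) %% p)%N.
Proof. by rewrite /dotp val_ZpD !val_ZpM modnDm. Qed.

Lemma dvdn_val_Zp (x : 'Z_p) : (p %| val x)%N = (x == 0).
Proof.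
have [->|x_neq0] := eqVneq x 0; first exact: dvdn0.
have x_gt0 : (0 < val x)%N.
  by rewrite lt0n; apply: contra x_neq0 => /eqP x_eq0; apply/eqP/val_inj.
by apply/negP => /(dvdn_leq x_gt0); rewrite leqNgt val_Zp_lt.
Qed.

Lemma Zp_unit (x : 'Z_p) : x != 0 -> x \is a GRing.unit.
Proof. by move=> x_neq0; rewrite -[x]natr_Zp unitZpE // prime_coprime // dvdn_val_Zp. Qed.

Lemma scalev_inj (e : 'Z_p * 'Z_p) :
  e != (0, 0) -> injective (fun k : 'Z_p => scalev k e).
Proof.
case: e => e1 e2 e_neq0 k k' ke.
have ke1 : k * e1 = k' * e1 := congr1 fst ke.
have ke2 : k * e2 = k' * e2 := congr1 snd ke.
have [e1_eq0|e1_neq0] := eqVneq e1 0; last exact: mulIr (Zp_unit e1_neq0) _ _ ke1.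
have e2_neq0 : e2 != 0 by apply: contra e_neq0 => /eqP e2_eq0; rewrite e1_eq0 e2_eq0.
exact: mulIr (Zp_unit e2_neq0) _ _ ke2.
Qed.

Lemma dotp_perpv_eq0P (e d : 'Z_p * 'Z_p) : e != (0, 0) ->
  reflect (exists k, d = scalev k e) (dotp (perpv e) d == 0).
Proof.
case: e d => e1 e2 [d1 d2] e_neq0; apply: (iffP eqP) => [|[k ->]]; last first.
  exact: dotp_perpv_scalev.
rewrite /dotp /= => d_perp.
have cross : e2 * d1 = e1 * d2 by apply/eqP; rewrite -subr_eq0 -d_perp; apply/eqP; ring.
have [e1_eq0|e1_neq0] := eqVneq e1 0.
  have e2_neq0 : e2 != 0 by apply: contra e_neq0 => /eqP ->; rewrite e1_eq0.
  have d1_eq0 : d1 = 0.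
    by apply: (mulrI (Zp_unit e2_neq0)); rewrite cross e1_eq0 mul0r mulr0.
  by exists (d2 / e2); rewrite /scalev /= divrK ?Zp_unit // e1_eq0 d1_eq0 mulr0.
exists (d1 / e1); rewrite /scalev /= divrK ?Zp_unit //.
congr pair; apply: (mulrI (Zp_unit e1_neq0)).
by rewrite -cross mulrA [e1 * _]mulrC divrK ?Zp_unit // mulrC.
Qed.

Lemma card_perpv_kernel (e : 'Z_p * 'Z_p) : e != (0, 0) ->
  #|[set d | dotp (perpv e) d == 0]| = p.
Proof.
move=> e_neq0; rewrite -[RHS]card_Zp_prime -cardsT -(card_imset _ (scalev_inj e_neq0)).
apply: eq_card => d; rewrite inE.
apply/(dotp_perpv_eq0P _ e_neq0)/imsetP => [[k ->]|[k _ ->]]; by exists k.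
Qed.

Lemma not_equidistributed_parallel (T : finType) (X : {set T})
    (pi : T -> 'Z_p * 'Z_p) (e d : 'Z_p * 'Z_p) :
  (0 < #|X|)%N -> e != (0, 0) -> ~~ equidistributed X (fun s => dotp e (pi s)) ->
  dotp (perpv e) d = 0 -> ~~ equidistributed X (fun s => dotp d (pi s)).
Proof.
move=> X_gt0 e_neq0 not_eq_e /eqP /(dotp_perpv_eq0P _ e_neq0) [k ->].
rewrite (eq_equidistributed _ (fun s => dotp_scalevl k e (pi s))).
have [->|k_neq0] := eqVneq k 0.
  rewrite (eq_equidistributed _ (g := fun _ => 0)) => [|s]; last exact: mul0r.
  by apply: (const_not_equidistributed (v := 1)); rewrite // eq_sym oner_eq0.
apply: contra not_eq_e; apply: (equidistributed_inj (h := *%R k)).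
exact: mulrI (Zp_unit k_neq0).
Qed.

End PrimeModulus.

Definition expZ (R : pzSemiRingType) (n : nat) (w : R) (x : 'Z_n) : R := w ^+ x.

Section RootOfUnityCharacter.
Variables (F : numFieldType) (p : nat) (w : F).
Hypotheses (p_prime : prime p) (prim_w : p.-primitive_root w).
Local Notation e := (@expZ F p w).

Lemma expZ_pow_mod x k : e x ^+ (k %% p) = e x ^+ k.
Proof.
by apply: expr_mod; rewrite /expZ -exprM mulnC exprM (prim_expr_order prim_w) expr1n.
Qed.

Lemma expZ0 : e 0 = 1. Proof. exact: expr0. Qed.

Lemma expZD x y : e (x + y) = e x * e y.
Proof. by rewrite /expZ val_ZpD // (prim_expr_mod prim_w) exprD. Qed.

Lemma expZM x y : e (x * y) = e y ^+ x.
Proof. by rewrite /expZ val_ZpM // (prim_expr_mod prim_w) mulnC exprM. Qed.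

Lemma expZ_neq0 x : e x != 0.
Proof. by rewrite expf_neq0 // (prim_root_eq0 prim_w) gtn_eqF ?prime_gt0. Qed.

Lemma expZN x : e (- x) = (e x)^-1.
Proof.
by apply: (mulfI (expZ_neq0 x)); rewrite -expZD subrr expZ0 mulfV ?expZ_neq0.
Qed.

Lemma expZ_eq1 x : (e x == 1) = (x == 0).
Proof. by rewrite /expZ -(prim_order_dvd prim_w) dvdn_val_Zp. Qed.

Lemma sum_expZ_pow c : \sum_(i < p) e c ^+ i = (c == 0)%:R * p%:R.
Proof.
have [->|c_neq0] := eqVneq c 0.
  rewrite expZ0 mul1r (eq_bigr (fun _ => 1)) ?sumr_const ?card_ord // => i _.
  exact: expr1n.
have /esym/eqP := subrX1 (e c) p.
rewrite -exprM mulnC exprM /expZ (prim_expr_order prim_w) expr1n subrr mulf_eq0 subr_eq0.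
by rewrite [w ^+ c == 1]expZ_eq1 (negPf c_neq0) mul0r => /eqP.
Qed.

Lemma sum_expZM c : \sum_(x : 'Z_p) e (x * c) = (c == 0)%:R * p%:R.
Proof.
rewrite -sum_expZ_pow -(sum_Zp_val p_prime (fun i => e c ^+ i)).
by apply: eq_bigr => x _; rewrite expZM.
Qed.

Lemma sum_expZ : \sum_(x : 'Z_p) e x = 0.
Proof.
rewrite (eq_bigr (fun x => e (x * 1))) => [|x _]; last by rewrite mulr1.
by rewrite sum_expZM oner_eq0 mul0r.
Qed.

Lemma sum_expZ_equidistributed (T : finType) (X : {set T}) (f : T -> 'Z_p) :
  equidistributed X f -> \sum_(s in X) e (f s) = 0.
Proof.
move=> /equidistributedP fib_eq.
have fiber_sum s : e (f s) = \sum_(x : 'Z_p) (f s == x)%:R * e x.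
  rewrite (bigD1 (f s)) //= eqxx mul1r big1 ?addr0 // => x /negPf.
  by rewrite eq_sym => ->; rewrite mul0r.
rewrite (eq_bigr _ (fun s _ => fiber_sum s)) exchange_big /=.
rewrite (eq_bigr (fun x => (\sum_(s in X) (f s == 0%R))%:R * e x)).
  by rewrite -mulr_sumr sum_expZ mulr0.
by move=> x _; rewrite -mulr_suml -natr_sum (fib_eq x 0%R).
Qed.

(* Summing the character sums over all directions [u] counts the points of
   [X] projecting to the origin, with multiplicity [p ^ 2]. *)
Lemma exists_not_equidistributed_dir (T : finType) (X : {set T})
    (pi : T -> 'Z_p * 'Z_p) :
  ~~ (p * p %| #|X|)%N ->
  exists2 u, u != (0, 0) & ~~ equidistributed X (fun s => dotp u (pi s)).
Proof.
move=> not_dvd; apply/exists_inP; apply: contraNT not_dvd => /exists_inPn all_eq.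
pose S := \sum_(u : 'Z_p * 'Z_p) \sum_(s in X) e (dotp u (pi s)).
have S_card : S = #|X|%:R.
  rewrite /S (bigD1 (0, 0)) //= [X in _ + X]big1 => [|u u_neq0]; last first.
    apply: (sum_expZ_equidistributed (f := fun s => dotp u (pi s))).
    by move: (all_eq u); rewrite negbK; apply.
  rewrite addr0 -sum1_card natr_sum; apply: eq_bigr => s _.
  by rewrite /dotp !mul0r addr0 expZ0.
have S_origin : S = (\sum_(s in X) (pi s == (0%R, 0%R)))%:R * (p * p)%:R.
  rewrite /S exchange_big /= natr_sum mulr_suml; apply: eq_bigr => s _.
  rewrite (eq_bigr (fun u => e (u.1 * (pi s).1) * e (u.2 * (pi s).2))) => [|u _].
    2: exact: expZD.
  rewrite -(pair_big xpredT xpredT (fun a b => e (a * (pi s).1) * e (b * (pi s).2))) /=.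
  rewrite -big_distrlr /= !sum_expZM.
  case: (pi s) => a b /=; rewrite xpair_eqE natrM.
  by case: (a == 0); case: (b == 0); rewrite /= ?mul0r ?mul1r ?mulr0.
move: S_card; rewrite S_origin -natrM => /eqP; rewrite eqr_nat => /eqP <-.
exact: dvdn_mull.
Qed.

End RootOfUnityCharacter.

(* A table satisfying the rectangle rule has the form [N x y = A x + B y];
   if its total is [#|I| * #|J|] then, by coprimality, [A] or [B] is constant. *)
Lemma rectangle_table_const_margin (I J : finType) (N : I -> J -> nat) :
  coprime #|I| #|J| ->
  (forall x1 x0 y1 y0, N x1 y1 + N x0 y0 = N x1 y0 + N x0 y1)%N ->
  (\sum_x \sum_y N x y = #|I| * #|J|)%N ->
  (forall x x', \sum_y N x y = \sum_y N x' y)%N \/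
  (forall y y', \sum_x N x y = \sum_x N x y')%N.
Proof.
move=> coprime_IJ rect total.
have [[i j] _|IJ_empty] := pickP (@predT (I * J)); last first.
  by left=> x x'; rewrite !big1 // => y _; have := IJ_empty (x, y).
have [[x0 y0] _ /= N_min] := arg_minnP (fun z : I * J => N z.1 z.2) (isT : predT (i, j)).
set K := N x0 y0 in N_min.
have N_split x y : N x y = (K + (N x y0 - K) + (N x0 y - K))%N.
  have := rect x x0 y y0; have := N_min (x, y0) isT; have := N_min (x0, y) isT.
  rewrite /= -/K; lia.
set D := (\sum_x (N x y0 - K))%N; set C := (\sum_y (N x0 y - K))%N.
have total_split : (#|I| * #|J| = #|I| * #|J| * K + #|J| * D + #|I| * C)%N.
  rewrite -[LHS]total (eq_bigr (fun x => #|J| * K + #|J| * (N x y0 - K) + C)%N).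
    have cardI : #|[pred _ : I | true]| = #|I| by apply: eq_card.
    by rewrite !big_split /= !sum_nat_const -big_distrr /= -/D cardI; lia.
  move=> x' _; rewrite (eq_bigr _ (fun y _ => N_split x' y)) !big_split /=.
  by rewrite !sum_nat_const.
have [D_eq0|D_gt0] := posnP D.
  left=> x x'; apply: eq_bigr => y _; rewrite N_split [in RHS]N_split.
  by move/eqP: D_eq0; rewrite sum_nat_eq0 => /forallP E; rewrite !(eqP (E _)).
have [C_eq0|C_gt0] := posnP C.
  right=> y y'; apply: eq_bigr => x' _; rewrite N_split [in RHS]N_split.
  by move/eqP: C_eq0; rewrite sum_nat_eq0 => /forallP E; rewrite !(eqP (E _)).
exfalso.
have J_gt0 : (0 < #|J|)%N by apply/card_gt0P; exists j.
have K_eq0 : K = 0%N.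
  apply/eqP; rewrite -leqn0 leqNgt; apply/negP => K_gt0.
  have : (0 < #|J| * D)%N by rewrite muln_gt0 J_gt0.
  have : (#|I| * #|J| <= #|I| * #|J| * K)%N by rewrite leq_pmulr.
  lia.
rewrite K_eq0 muln0 add0n in total_split.
have J_dvd_C : (#|J| %| C)%N.
  have coprime_JI : coprime #|J| #|I| by rewrite coprime_sym.
  rewrite -(Gauss_dvdr C coprime_JI).
  have -> : (#|I| * C = #|J| * (#|I| - D))%N by rewrite mulnBr; lia.
  exact: dvdn_mulr.
have : (#|J| <= C)%N by apply: dvdn_leq.
have : (0 < #|J| * D)%N by rewrite muln_gt0 J_gt0.
nia.
Qed.

Definition joint_count (T U V : finType) (X : {set T}) (a : T -> U) (b : T -> V)
    (x : U) (y : V) : nat :=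
  \sum_(s in X) ((a s == x) && (b s == y)).

Section JointCount.
Variables (T U V : finType) (X : {set T}) (a : T -> U) (b : T -> V).

Let sum_eq_pred1 (W : finType) (w : W) : (\sum_v (w == v) = 1)%N.
Proof. by rewrite (bigD1 w) //= eqxx big1 // => v /negPf; rewrite eq_sym => ->. Qed.

Lemma sum_joint_countr x : (\sum_y joint_count X a b x y = \sum_(s in X) (a s == x))%N.
Proof.
rewrite exchange_big; apply: eq_bigr => s _.
by under eq_bigr => y _ do rewrite -mulnb; rewrite -big_distrr /= sum_eq_pred1 muln1.
Qed.

Lemma sum_joint_countl y : (\sum_x joint_count X a b x y = \sum_(s in X) (b s == y))%N.
Proof.
rewrite exchange_big; apply: eq_bigr => s _.
by under eq_bigr => x _ do rewrite -mulnb; rewrite -big_distrl /= sum_eq_pred1 mul1n.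
Qed.

Lemma sum_joint_count : (\sum_x \sum_y joint_count X a b x y = #|X|)%N.
Proof.
under eq_bigr => x _ do rewrite sum_joint_countr.
by rewrite exchange_big -sum1_card; apply: eq_bigr => s _; rewrite sum_eq_pred1.
Qed.

End JointCount.

Lemma prim_root_exp_factor (R : idomainType) m n (z : R) :
  (0 < n)%N -> (m * n).-primitive_root z -> m.-primitive_root (z ^+ n).
Proof. by move=> n_gt0 /exp_prim_root /(_ n); rewrite gcdnMl mulnK. Qed.

Section VanishingSums.
Variables (F : numFieldType) (p q : nat) (z : F).
Hypotheses (p_prime : prime p) (q_prime : prime q) (p_neq_q : p != q).
Hypothesis prim_z : (p * q).-primitive_root z.

Let prim_zp : p.-primitive_root (z ^+ q).
Proof. exact: prim_root_exp_factor (prime_gt0 q_prime) prim_z. Qed.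

Let prim_zq : q.-primitive_root (z ^+ p).
Proof. by apply: prim_root_exp_factor (prime_gt0 p_prime) _; rewrite mulnC. Qed.

Local Notation eP := (@expZ F p (z ^+ q)).
Local Notation eQ := (@expZ F q (z ^+ p)).

Variables (T : finType) (X : {set T}) (a : T -> 'Z_p) (b : T -> 'Z_q).
Hypothesis sum_eq0 : \sum_(s in X) eP (a s) * eQ (b s) = 0.

(* The sum is [Q.[z]] for a rational polynomial [Q]; Galois conjugation
   [z |-> z ^+ k], with [k] given by the Chinese remainder theorem, raises the
   [p]-part to the power [i] and the [q]-part to the power [j]. *)
Lemma vanishing_sum_conj i j : (0 < i < p)%N -> (0 < j < q)%N ->
  \sum_(s in X) eP (a s) ^+ i * eQ (b s) ^+ j = 0.
Proof.
case/andP=> i_gt0 i_lt_p /andP [j_gt0 j_lt_q].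
pose Q : {poly rat} := \sum_(s in X) 'X^(q * a s + p * b s).
have ratr_Q (y : F) : (map_poly ratr Q).[y] = \sum_(s in X) y ^+ (q * a s + p * b s).
  rewrite rmorph_sum horner_sum; apply: eq_bigr => s _.
  by rewrite /= map_polyXn hornerXn.
have expZ_z s : eP (a s) * eQ (b s) = z ^+ (q * a s + p * b s).
  by rewrite /expZ exprD !exprM.
have Qz : root (map_poly ratr Q) z.
  by rewrite /root ratr_Q -(eq_bigr _ (fun s _ => expZ_z s)) sum_eq0.
have coprime_pq : coprime p q by rewrite prime_coprime // dvdn_prime2.
set k := chinese p q i j.
have k_mod_p : (k %% p = i)%N by rewrite chinese_modl // modn_small.
have k_mod_q : (k %% q = j)%N by rewrite chinese_modr // modn_small.
have coprime_k : coprime k (p * q).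
  rewrite coprimeMr -(coprime_modl k p) -(coprime_modl k q) k_mod_p k_mod_q.
  by rewrite ![coprime _ p]coprime_sym ![coprime _ q]coprime_sym !prime_coprime // !gtnNdvd.
have := root_ratr_prim_root_exp_coprime prim_z Qz coprime_k.
rewrite /root ratr_Q => /eqP sum_k; rewrite -[RHS]sum_k; apply: eq_bigr => s _.
rewrite exprD.
have -> : (z ^+ k) ^+ (q * a s) = eP (a s) ^+ k.
  by rewrite /expZ -!exprM mulnCA [(k * _)%N]mulnC.
have -> : (z ^+ k) ^+ (p * b s) = eQ (b s) ^+ k.
  by rewrite /expZ -!exprM mulnCA [(k * _)%N]mulnC.
rewrite -(expZ_pow_mod prim_zp (a s) k) -(expZ_pow_mod prim_zq (b s) k).
by rewrite k_mod_p k_mod_q.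
Qed.

Local Notation N := (joint_count X a b).

Lemma vanishing_sum_rectangle x1 x0 y1 y0 :
  (N x1 y1 + N x0 y0 = N x1 y0 + N x0 y1)%N.
Proof.
pose f s i := eP (a s - x1) ^+ i - eP (a s - x0) ^+ i.
pose g s j := eQ (b s - y1) ^+ j - eQ (b s - y0) ^+ j.
(* Fourier inversion: [\sum_(i < p, j < q) f s i * g s j] is [p * q] times the
   signed indicator of [(a s, b s)] on the corners of the rectangle, while the
   sum over [s] of each summand vanishes by [vanishing_sum_conj]. *)
have fg_eq0 (i : 'I_p) (j : 'I_q) : \sum_(s in X) f s i * g s j = 0.
  have [i_eq0|i_neq0] := eqVneq (i : nat) 0%N.
    by rewrite big1 // => s _; rewrite /f i_eq0 !expr0 subrr mul0r.
  have [j_eq0|j_neq0] := eqVneq (j : nat) 0%N.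
    by rewrite big1 // => s _; rewrite /g j_eq0 !expr0 subrr mulr0.
  rewrite (eq_bigr (fun s => eP (a s) ^+ i * eQ (b s) ^+ j *
      ((eP (- x1) ^+ i - eP (- x0) ^+ i) * (eQ (- y1) ^+ j - eQ (- y0) ^+ j)))).
    by rewrite -mulr_suml vanishing_sum_conj ?mul0r // lt0n ?i_neq0 ?j_neq0 /=.
  move=> s _; rewrite /f /g !(expZD p_prime prim_zp) !(expZD q_prime prim_zq).
  by rewrite !exprMn; ring.
have sum_f s : \sum_(i < p) f s i = ((a s == x1)%:R - (a s == x0)%:R) * p%:R.
  by rewrite sumrB !(sum_expZ_pow p_prime prim_zp) !subr_eq0 mulrBl.
have sum_g s : \sum_(j < q) g s j = ((b s == y1)%:R - (b s == y0)%:R) * q%:R.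
  by rewrite sumrB !(sum_expZ_pow q_prime prim_zq) !subr_eq0 mulrBl.
have : \sum_(s in X) (\sum_(i < p) f s i) * (\sum_(j < q) g s j) = 0.
  under eq_bigr => s _ do rewrite big_distrlr /=.
  rewrite exchange_big big1 => [//|i _]; rewrite exchange_big big1 => [//|j _].
  exact: fg_eq0.
under eq_bigr => s _ do rewrite sum_f sum_g.
rewrite (eq_bigr (fun s => (p * q)%:R * (((a s == x1) && (b s == y1))%:R
    + ((a s == x0) && (b s == y0))%:R - ((a s == x1) && (b s == y0))%:R
    - ((a s == x0) && (b s == y1))%:R))) => [|s _]; last first.
  by rewrite -!mulnb !natrM; ring.
rewrite -mulr_sumr => /eqP; rewrite mulf_eq0 (negPf (prim_root_natf_neq0 prim_z)) /=.
rewrite !sumrB big_split /= -!natr_sum -natrD -addrA -opprD -natrD subr_eq0.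
by rewrite eqr_nat => /eqP.
Qed.

Lemma vanishing_sum_equidistributed :
  #|X| = (p * q)%N -> equidistributed X a \/ equidistributed X b.
Proof.
move=> card_X.
have coprime_pq : coprime #|'Z_p| #|'Z_q|.
  by rewrite !card_Zp_prime // prime_coprime // dvdn_prime2.
have total : (\sum_x \sum_y N x y = #|'Z_p| * #|'Z_q|)%N.
  by rewrite sum_joint_count card_X !card_Zp_prime.
case: (rectangle_table_const_margin coprime_pq vanishing_sum_rectangle total).
  by move=> rows; left; apply/equidistributedP => x x'; rewrite -!(sum_joint_countr X a b).
by move=> cols; right; apply/equidistributedP => y y'; rewrite -!(sum_joint_countl X a b).
Qed.

End VanishingSums.

Lemma mulmx_scalarC (F : fieldType) n (A B : 'M[F]_n) (c : F) :
  c != 0 -> A *m B = c%:M -> B *m A = c%:M.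
Proof.
move=> c_neq0 AB.
have /mulmx1C : A *m (c^-1 *: B) = 1%:M by rewrite -scalemxAr AB scale_scalar_mx mulVf.
rewrite -scalemxAl => /(congr1 ( *:%R c)).
by rewrite scalerA mulfV // scale1r scalemx1 => ->.
Qed.

Section Duality.
Variables (T : finType) (F : numFieldType) (sub : T -> T -> T) (psi : T -> T -> F).
Hypotheses (psiC : forall x y, psi x y = psi y x)
  (psi_subl : forall x x' y, psi (sub x x') y = psi x y / psi x' y)
  (psi_neq0 : forall x y, psi x y != 0).

Definition orthogonal_for (L S : {set T}) : Prop :=
  forall l l', l \in L -> l' \in L -> l != l' -> \sum_(s in S) psi (sub l l') s = 0.

(* The character matrix [A i j = psi (lam i) (sv j)] satisfies
   [A *m B = n%:M] for [B j i = (A i j)^-1]; hence also [B *m A = n%:M]. *)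
Lemma orthogonal_dual_ord m n (lam : 'I_m -> T) (sv : 'I_n -> T) : m = n ->
  (forall i i', i != i' -> \sum_j psi (sub (lam i) (lam i')) (sv j) = 0) ->
  forall j j', j != j' -> \sum_i psi (sub (sv j) (sv j')) (lam i) = 0.
Proof.
move=> m_eq_n; subst m => orth j j' j_neq.
have n_neq0 : n%:R != 0 :> F by rewrite pnatr_eq0 -lt0n (leq_trans (ltn0Sn _) (ltn_ord j)).
pose A := \matrix_(i, j) psi (lam i) (sv j).
pose B := \matrix_(j, i) (psi (lam i) (sv j))^-1.
have AB : A *m B = n%:R%:M.
  apply/matrixP => i i'; rewrite !mxE.
  under eq_bigr => k _ do rewrite !mxE -psi_subl.
  have [<-|i_neq] := eqVneq i i'; last by rewrite mulr0n orth.
  rewrite (eq_bigr (fun=> 1)) ?sumr_const ?card_ord // => k _.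
  by rewrite psi_subl mulfV.
have /matrixP /(_ j' j) := mulmx_scalarC n_neq0 AB.
rewrite !mxE eq_sym (negPf j_neq) mulr0n => BA_j'j; rewrite -[RHS]BA_j'j.
by apply: eq_bigr => i _; rewrite !mxE psi_subl !(psiC (lam i)) mulrC.
Qed.

Lemma orthogonal_for_sym (L S : {set T}) :
  #|L| = #|S| -> orthogonal_for L S -> orthogonal_for S L.
Proof.
move=> card_LS orthLS s s' sS s'S s_neq.
pose r := enum_rank_in sS.
have := orthogonal_dual_ord (lam := enum_val (A := L)) (sv := enum_val (A := S)) card_LS.
move=> /(_ _ (r s) (r s')); rewrite !enum_rankK_in // -big_enum_val; apply.
- move=> i i' i_neq; rewrite -big_enum_val orthLS ?enum_valP //.
  by apply: contra i_neq => /eqP/enum_val_inj ->.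
- by apply: contra s_neq => /eqP/(congr1 enum_val); rewrite !enum_rankK_in // => ->.
Qed.

End Duality.

Section Tiling.
Variables (R : realType) (p q : nat).
Hypotheses (p_prime : prime p) (q_prime : prime q) (p_neq_q : p != q).

Let zeta : R[i] := expi (p * q)%:R^-1.

Let prim_zeta : (p * q).-primitive_root zeta.
Proof. by apply: expi_prim_root; rewrite muln_gt0 !prime_gt0. Qed.

Let prim_zp : p.-primitive_root (zeta ^+ q).
Proof. exact: prim_root_exp_factor (prime_gt0 q_prime) prim_zeta. Qed.

Let prim_zq : q.-primitive_root (zeta ^+ p).
Proof. by apply: prim_root_exp_factor (prime_gt0 p_prime) _; rewrite mulnC. Qed.

Lemma chi_expZ (w s : Gty p q) :
  chi R w s = expZ (zeta ^+ q) (dotp w.1 s.1) * expZ (zeta ^+ p) (dotp w.2 s.2).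
Proof.
rewrite /chi /expZ !val_dotp // (prim_expr_mod prim_zp) (prim_expr_mod prim_zq).
set A := (_ + _)%N; set B := (_ + _)%N.
have -> : A%:R / p%:R + B%:R / q%:R = (q * A + p * B)%:R * (p * q)%:R^-1 :> R.
  by rewrite natrD !natrM; field; rewrite !pnatr_eq0 -!lt0n !prime_gt0.
by rewrite expi_natrM exprD !exprM.
Qed.

Lemma chiC (w s : Gty p q) : chi R w s = chi R s w.
Proof. by rewrite /chi !(mulnC w.1.1) !(mulnC w.1.2) !(mulnC w.2.1) !(mulnC w.2.2). Qed.

Lemma chi_neq0 (w s : Gty p q) : chi R w s != 0.
Proof. by rewrite chi_expZ mulf_neq0 ?expZ_neq0. Qed.

Lemma chi_subl (w w' s : Gty p q) : chi R (Gsub w w') s = chi R w s / chi R w' s.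
Proof.
rewrite !chi_expZ ![dotp _ s.1]dotpC ![dotp _ s.2]dotpC !dotpBr.
rewrite (expZD p_prime prim_zp) (expZD q_prime prim_zq).
by rewrite (expZN p_prime prim_zp) (expZN q_prime prim_zq) invfM mulrACA.
Qed.

Lemma chi_sum_equidistributed (L : {set Gty p q}) (d : Gty p q) :
  #|L| = (p * q)%N -> \sum_(l in L) chi R d l = 0 ->
  equidistributed L (fun l => dotp d.1 l.1) \/ equidistributed L (fun l => dotp d.2 l.2).
Proof.
move=> card_L; rewrite (eq_bigr _ (fun l _ => chi_expZ d l)) => sum_eq0.
exact: (vanishing_sum_equidistributed p_prime q_prime p_neq_q prim_zeta
  (a := fun l => dotp d.1 l.1) (b := fun l => dotp d.2 l.2) sum_eq0 card_L).
Qed.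

Definition perp_proj (e : 'Z_p * 'Z_p) (e' : 'Z_q * 'Z_q) (g : Gty p q) : 'Z_p * 'Z_q :=
  (dotp (perpv e) g.1, dotp (perpv e') g.2).

Lemma perp_proj_sub e e' (g s : Gty p q) :
  perp_proj e e' (Gsub g s) =
    ((perp_proj e e' g).1 - (perp_proj e e' s).1, (perp_proj e e' g).2 - (perp_proj e e' s).2).
Proof. by rewrite /perp_proj /= !dotpBr. Qed.

Lemma card_perp_proj_kernel e e' : e != (0, 0) -> e' != (0, 0) ->
  #|[set g | perp_proj e e' g == (0, 0)]| = (p * q)%N.
Proof.
move=> e_neq0 e'_neq0.
transitivity #|setX [set u | dotp (perpv e) u == 0] [set v | dotp (perpv e') v == 0]|.
  by apply: eq_card => -[u v]; rewrite !inE xpair_eqE.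
by rewrite cardsX !card_perpv_kernel.
Qed.

Lemma perp_proj_injective (S L : {set Gty p q}) e e' :
  #|L| = (p * q)%N -> orthogonal_for (@Gsub p q) (@chi R p q) S L ->
  e != (0, 0) -> ~~ equidistributed L (fun l => dotp e l.1) ->
  e' != (0, 0) -> ~~ equidistributed L (fun l => dotp e' l.2) ->
  {in S &, injective (perp_proj e e')}.
Proof.
move=> card_L orth_SL e_neq0 not_eq_e e'_neq0 not_eq_e' s s' sS s'S proj_eq.
apply/eqP; apply: contraT => s_neq.
have := perp_proj_sub e e' s s'; rewrite proj_eq !subrr => proj_d.
have d1_perp : dotp (perpv e) (Gsub s s').1 = 0 := congr1 fst proj_d.
have d2_perp : dotp (perpv e') (Gsub s s').2 = 0 := congr1 snd proj_d.
have L_gt0 : (0 < #|L|)%N by rewrite card_L muln_gt0 !prime_gt0.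
case: (chi_sum_equidistributed card_L (orth_SL s s' sS s'S s_neq)).
  by move/negP: (not_equidistributed_parallel p_prime L_gt0 e_neq0 not_eq_e d1_perp).
by move/negP: (not_equidistributed_parallel q_prime L_gt0 e'_neq0 not_eq_e' d2_perp).
Qed.

Lemma tile_kernel (f : Gty p q -> 'Z_p * 'Z_q) (S : {set Gty p q}) :
  (forall g s, f (Gsub g s) = ((f g).1 - (f s).1, (f g).2 - (f s).2)) ->
  {in S &, injective f} -> #|S| = (p * q)%N ->
  #|[set t | f t == (0, 0)]| = (p * q)%N -> tile S.
Proof.
move=> f_sub f_inj card_S card_ker; exists [set t | f t == (0, 0)]; split.
  have f_onto : f @: S = setT.
    apply/eqP; rewrite eqEcard subsetT cardsT card_prod !card_Zp_prime //.
    by rewrite card_in_imset // card_S leqnn.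
  apply/setP => g; rewrite inE; apply/imset2P.
  have /imsetP [s sS fs_eq] : f g \in f @: S by rewrite f_onto.
  exists s (Gsub g s) => //; first by rewrite inE f_sub -fs_eq !subrr.
  by case: g s {sS fs_eq} => [[? ?] [? ?]] [[? ?] [? ?]]; rewrite /Gadd /Gsub /= !subrKC.
by rewrite card_S card_ker !card_prod !card_Zp_prime // mulnACA.
Qed.

Lemma spectral_orthogonal_dual (S : {set Gty p q}) :
  spectral R S ->
  exists2 L : {set Gty p q}, #|L| = #|S| & orthogonal_for (@Gsub p q) (@chi R p q) S L.
Proof.
case=> L [card_LS orth_LS]; exists L => //.
exact: orthogonal_for_sym chiC chi_subl chi_neq0 _ _ card_LS orth_LS.
Qed.

Lemma orthogonal_dual_tile (S L : {set Gty p q}) :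
  #|S| = (p * q)%N -> #|L| = (p * q)%N ->
  orthogonal_for (@Gsub p q) (@chi R p q) S L -> tile S.
Proof.
move=> card_S card_L orth_SL.
have [e e_neq0 not_eq_e] :
    exists2 e, e != (0, 0) & ~~ equidistributed L (fun l => dotp e l.1).
  apply: (exists_not_equidistributed_dir p_prime (expi_prim_root R (prime_gt0 p_prime))).
  by rewrite card_L dvdn_pmul2l ?prime_gt0 // dvdn_prime2.
have [e' e'_neq0 not_eq_e'] :
    exists2 e', e' != (0, 0) & ~~ equidistributed L (fun l => dotp e' l.2).
  apply: (exists_not_equidistributed_dir q_prime (expi_prim_root R (prime_gt0 q_prime))).
  by rewrite card_L mulnC dvdn_pmul2l ?prime_gt0 // dvdn_prime2 // eq_sym.
apply: (tile_kernel (f := perp_proj e e')) => //.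
- exact: perp_proj_sub.
- exact: perp_proj_injective card_L orth_SL e_neq0 not_eq_e e'_neq0 not_eq_e'.
- exact: card_perp_proj_kernel.
Qed.

End Tiling.

Theorem proposition4p3 (R : realType) (p q : nat) :
  prime p -> prime q -> p <> q ->
  forall S : {set Gty p q},
    spectral R S -> #|S| = (p * q)%N -> tile S.
Proof.
move=> p_prime q_prime /eqP p_neq_q S.
case/(spectral_orthogonal_dual p_prime q_prime) => L card_LS orth_SL card_S.
apply: (orthogonal_dual_tile p_prime q_prime p_neq_q card_S _ orth_SL).
by rewrite card_LS.
Qed.
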